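(* Let $\lambda>0$, $M>0$, $\ell>0$, $m>0$, $g>0$, $k>0$, and set $\omega^2=g/\ell$, $A=-\omega^2(1+m/M)$, $B=2\lambda\left(\frac{1}{M\ell}+\frac{1}{m\ell}\right)$. Consider the linear system $\dot y=Q y$ on $\mathbb{R}^8$, $y=(\theta_1,v_1,\theta_2,v_2,x_1,w_1,x_2,w_2)^T$, given by \[ \begin{aligned} \dot\theta_1&=v_1, & \dot v_1&=A\theta_1+Bv_1+\tfrac{k}{M\ell}x_1+\tfrac{2\rho}{M\ell}w_1-\tfrac{k}{M\ell}x_2,\\ \dot\theta_2&=v_2, & \dot v_2&=A\theta_2+Bv_2-\tfrac{k}{M\ell}x_1+\tfrac{k}{M\ell}x_2+\tfrac{2\rho}{M\ell}w_2,\\ \dot x_1&=w_1, & \dot w_1&=\tfrac{mg}{M}\theta_1-\tfrac{2\lambda}{M}v_1-\tfrac{k}{M}x_1-\tfrac{2\rho}{M}w_1+\tfrac{k}{M}x_2,\\ \dot x_2&=w_2, & \dot w_2&=\tfrac{mg}{M}\theta_2-\tfrac{2\lambda}{M}v_2+\tfrac{k}{M}x_1-\tfrac{k}{M}x_2-\tfrac{2\rho}{M}w_2, \end{aligned} \] and the piecewise-defined system (S) described in the context. Then, for every sufficiently small $\rho>0$, both systems have the line of fixed points $\{\theta_1=v_1=\theta_2=v_2=w_1=w_2=0,\ x_1=x_2\}$, and this line of fixed points is Lyapunov unstable for both systems.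
   Context: System (S) (two identical coupled pendulum clocks, small-amplitude model): with $f(\theta;\lambda,\tilde\theta)=-2\lambda$ if $|\theta|<\tilde\theta$ and $=2\lambda$ if $|\theta|\ge\tilde\theta$ ($\tilde\theta>0$), unknowns $\theta_1,\theta_2,x_1,x_2$ of $t$, \[ \begin{aligned} &\ddot\theta_1+\Big(\tfrac{1}{m\ell}+\tfrac{1}{M\ell}\Big)f(\theta_1;\lambda,\tilde\theta)\dot\theta_1+\omega^2\Big(1+\tfrac{m}{M}\Big)\theta_1-\tfrac{2\rho}{M\ell}\dot x_1=-\tfrac{k}{M\ell}(x_2-x_1),\\ &\ddot\theta_2+\Big(\tfrac{1}{m\ell}+\tfrac{1}{M\ell}\Big)f(\theta_2;\lambda,\tilde\theta)\dot\theta_2+\omega^2\Big(1+\tfrac{m}{M}\Big)\theta_2-\tfrac{2\rho}{M\ell}\dot x_2=\tfrac{k}{M\ell}(x_2-x_1),\\ &\ddot x_1-\tfrac{1}{M}f(\theta_1;\lambda,\tilde\theta)\dot\theta_1-\tfrac{m}{M}g\theta_1+\tfrac{2\rho}{M}\dot x_1=\tfrac{k}{M}(x_2-x_1),\\ &\ddot x_2-\tfrac{1}{M}f(\theta_2;\lambda,\tilde\theta)\dot\theta_2-\tfrac{m}{M}g\theta_2+\tfrac{2\rho}{M}\dot x_2=-\tfrac{k}{M}(x_2-x_1), \end{aligned} \] regarded as a first-order system in $(\theta_1,\dot\theta_1,\theta_2,\dot\theta_2,x_1,\dot x_1,x_2,\dot x_2)$. In the region $|\theta_1|,|\theta_2|<\tilde\theta$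 it coincides with the linear system $\dot y=Qy$ of the claim. Here $\theta_i$ are pendulum angles, $x_i$ attachment-point positions, $m$ pendulum mass, $\ell$ pendulum length, $M$ attachment mass, $k$ coupling stiffness, $\rho$ coupling damping, $g$ gravity. *)

From Stdlib Require Import Reals.
Open Scope R_scope.

Record st := mkst { th1 : R; v1 : R; th2 : R; v2 : R;
                    x1 : R; w1 : R; x2 : R; w2 : R }.

Definition st0 : st := mkst 0 0 0 0 0 0 0 0.

Definition dist8 (y p : st) : R :=
  sqrt ((th1 y - th1 p)^2 + (v1 y - v1 p)^2 + (th2 y - th2 p)^2 + (v2 y - v2 p)^2
      + (x1 y - x1 p)^2 + (w1 y - w1 p)^2 + (x2 y - x2 p)^2 + (w2 y - w2 p)^2).

Definition fixed_line (p : st) : Prop :=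
  th1 p = 0 /\ v1 p = 0 /\ th2 p = 0 /\ v2 p = 0 /\ w1 p = 0 /\ w2 p = 0
  /\ x1 p = x2 p.

Definition omega2 (g l : R) : R := g / l.

Definition Qfield (lam M l m g k rho : R) (y : st) : st :=
  let A := - omega2 g l * (1 + m / M) in
  let B := 2 * lam * (1 / (M * l) + 1 / (m * l)) in
  mkst
    (v1 y)
    (A * th1 y + B * v1 y + k / (M * l) * x1 y + 2 * rho / (M * l) * w1 y
       - k / (M * l) * x2 y)
    (v2 y)
    (A * th2 y + B * v2 y - k / (M * l) * x1 y + k / (M * l) * x2 y
       + 2 * rho / (M * l) * w2 y)
    (w1 y)
    (m * g / M * th1 y - 2 * lam / M * v1 y - k / M * x1 y - 2 * rho / M * w1 y
       + k / M * x2 y)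
    (w2 y)
    (m * g / M * th2 y - 2 * lam / M * v2 y + k / M * x1 y - k / M * x2 y
       - 2 * rho / M * w2 y).

Definition fsw (lam thT th : R) : R :=
  if Rlt_dec (Rabs th) thT then - 2 * lam else 2 * lam.

Definition Sfield (lam M l m g k rho thT : R) (y : st) : st :=
  let c := 1 / (m * l) + 1 / (M * l) in
  let W := omega2 g l * (1 + m / M) in
  mkst
    (v1 y)
    (- c * fsw lam thT (th1 y) * v1 y - W * th1 y + 2 * rho / (M * l) * w1 y
       - k / (M * l) * (x2 y - x1 y))
    (v2 y)
    (- c * fsw lam thT (th2 y) * v2 y - W * th2 y + 2 * rho / (M * l) * w2 y
       + k / (M * l) * (x2 y - x1 y))
    (w1 y)
    (1 / M * fsw lam thT (th1 y) * v1 y + m / M * g * th1 y - 2 * rho / M * w1 y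
       + k / M * (x2 y - x1 y))
    (w2 y)
    (1 / M * fsw lam thT (th2 y) * v2 y + m / M * g * th2 y - 2 * rho / M * w2 y
       - k / M * (x2 y - x1 y)).

Definition is_solution (F : st -> st) (y : R -> st) (T : R) : Prop :=
  forall t, 0 <= t <= T ->
    derivable_pt_lim (fun s => th1 (y s)) t (th1 (F (y t))) /\
    derivable_pt_lim (fun s => v1 (y s)) t (v1 (F (y t))) /\
    derivable_pt_lim (fun s => th2 (y s)) t (th2 (F (y t))) /\
    derivable_pt_lim (fun s => v2 (y s)) t (v2 (F (y t))) /\
    derivable_pt_lim (fun s => x1 (y s)) t (x1 (F (y t))) /\
    derivable_pt_lim (fun s => w1 (y s)) t (w1 (F (y t))) /\
    derivable_pt_lim (fun s => x2 (y s)) t (x2 (F (y t))) /\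
    derivable_pt_lim (fun s => w2 (y s)) t (w2 (F (y t))).

Definition is_fixed_point (F : st -> st) (p : st) : Prop := F p = st0.

Definition near (S : st -> Prop) (e : R) (y : st) : Prop :=
  exists p, S p /\ dist8 y p < e.

Definition lyapunov_stable (F : st -> st) (S : st -> Prop) : Prop :=
  forall eps, 0 < eps -> exists delta, 0 < delta /\
    forall (y : R -> st) (T : R), 0 <= T -> is_solution F y T ->
      near S delta (y 0) ->
      forall t, 0 <= t <= T -> near S eps (y t).

Definition lyapunov_unstable (F : st -> st) (S : st -> Prop) : Prop :=
  ~ lyapunov_stable F S.

From Stdlib Require Import Reals Lra Psatz.
Open Scope R_scope.

(* In-phase motions (theta1 = theta2, x1 = x2) are invariant for the
   linear field Q: the coupling spring is never stretched, and (theta, v, w)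
   obey a closed 3-dimensional linear system.  Its characteristic cubic has
   constant term 2 rho g / (M l) > 0, hence a negative root r; the two
   remaining roots have sum B - 2 rho / M - r > 0 as soon as rho is small,
   so at least one of them has positive real part.  The corresponding real
   mode is an exact solution of Q whose theta-components grow like e^{a t}
   and keep returning to values comparable to their running maximum.
   Rescaling this mode gives solutions starting arbitrarily close to the line
   (the origin lies on it) that leave a fixed neighbourhood of it while
   |theta_i| stays below thetatilde; there S coincides with Q, so the same
   scaled mode witnesses the instability of both systems. *)

Lemma derivable_pt_lim_val f t d d' :
  derivable_pt_lim f t d -> d = d' -> derivable_pt_lim f t d'.
Proof. now intros H <-. Qed.

Lemma derivable_pt_lim_lincomb p0 p1 t d0 d1 a b :
  derivable_pt_lim p0 t d0 -> derivable_pt_lim p1 t d1 ->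
  derivable_pt_lim (fun s => a * p0 s + b * p1 s) t (a * d0 + b * d1).
Proof.
  intros H0 H1.
  apply (derivable_pt_lim_plus (fun s => a * p0 s) (fun s => b * p1 s)).
  - exact (derivable_pt_lim_scal p0 a t d0 H0).
  - exact (derivable_pt_lim_scal p1 b t d1 H1).
Qed.

Lemma derivable_pt_lim_dilate f f' a t :
  derivable_pt_lim f (a * t) (f' (a * t)) ->
  derivable_pt_lim (fun s => f (a * s)) t (a * f' (a * t)).
Proof.
  intros Hf.
  apply (derivable_pt_lim_val _ _ (f' (a * t) * a)); [|ring].
  apply (derivable_pt_lim_comp (fun s => a * s) f); [|exact Hf].
  apply (derivable_pt_lim_val _ _ (a * 1)); [|ring].
  apply (derivable_pt_lim_scal id), derivable_pt_lim_id.
Qed.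

Lemma derivable_pt_lim_exp_dilate a t :
  derivable_pt_lim (fun s => exp (a * s)) t (a * exp (a * t)).
Proof. apply (derivable_pt_lim_dilate exp exp), derivable_pt_lim_exp. Qed.

Lemma derivable_pt_lim_damped_cos a b t :
  derivable_pt_lim (fun s => exp (a * s) * cos (b * s)) t
    (a * (exp (a * t) * cos (b * t)) - b * (exp (a * t) * sin (b * t))).
Proof.
  eapply derivable_pt_lim_val.
  - apply (derivable_pt_lim_mult (fun s => exp (a * s)) (fun s => cos (b * s))).
    + apply derivable_pt_lim_exp_dilate.
    + apply (derivable_pt_lim_dilate cos (fun u => - sin u)), derivable_pt_lim_cos.
  - ring.
Qed.

Lemma derivable_pt_lim_damped_sin a b t :
  derivable_pt_lim (fun s => exp (a * s) * sin (b * s)) t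
    (a * (exp (a * t) * sin (b * t)) + b * (exp (a * t) * cos (b * t))).
Proof.
  eapply derivable_pt_lim_val.
  - apply (derivable_pt_lim_mult (fun s => exp (a * s)) (fun s => sin (b * s))).
    + apply derivable_pt_lim_exp_dilate.
    + apply (derivable_pt_lim_dilate sin cos), derivable_pt_lim_sin.
  - ring.
Qed.

Definition exp_growing (f : R -> R) : Prop :=
  exists a H h, 0 < a /\ 0 < H /\ 0 < h /\
    (forall t, 0 <= t -> Rabs (f t) <= H * exp (a * t)) /\
    (forall N, exists t, N <= t /\ h * exp (a * t) <= Rabs (f t)).

(* |f| takes arbitrarily large values |f T| which dominate, up to a fixed
   factor kappa, all earlier values of |f|: exactly what is needed to rescale
   f so that it stays small on [0, T] and is not small at T. *)
Definition has_growing_peaks (f : R -> R) : Prop :=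
  exists kappa, 0 < kappa /\ forall K, exists T, 0 <= T /\ K <= Rabs (f T) /\
    forall t, 0 <= t <= T -> kappa * Rabs (f t) <= Rabs (f T).

Lemma exp_le_exp x y : x <= y -> exp x <= exp y.
Proof.
  intros [Hlt|Heq]; [now apply Rlt_le, exp_increasing | rewrite Heq; apply Rle_refl].
Qed.

Lemma exp_growing_peaks f : exp_growing f -> has_growing_peaks f.
Proof.
  intros (a & H & h & Ha & HH & Hh & Hup & Hlow).
  exists (h / H); split; [now apply Rdiv_lt_0_compat|].
  intros K. destruct (Hlow (Rmax 0 (K / (h * a)))) as [T [HNT HfT]].
  assert (HT : 0 <= T) by (eapply Rle_trans; [apply Rmax_l | exact HNT]).
  exists T; repeat split; [exact HT | |].
  - (* e^{aT} >= 1 + aT and T >= K / (h a) *)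
    assert (HKT : K <= h * a * T).
    { assert (HN : K / (h * a) <= T) by (eapply Rle_trans; [apply Rmax_r | exact HNT]).
      apply (Rmult_le_compat_l (h * a)) in HN; [|nra].
      replace (h * a * (K / (h * a))) with K in HN by (field; lra). exact HN. }
    pose proof (exp_ineq1_le (a * T)). nra.
  - intros t [Ht0 HtT].
    assert (exp (a * t) <= exp (a * T)) by (apply exp_le_exp; nra).
    specialize (Hup t Ht0).
    apply (Rmult_le_compat_l (h / H)) in Hup; [|left; now apply Rdiv_lt_0_compat].
    replace (h / H * (H * exp (a * t))) with (h * exp (a * t)) in Hup by (field; lra).
    nra.
Qed.

Definition solves_second_order (s q : R) (p0 p1 : R -> R) : Prop :=
  forall t, derivable_pt_lim p0 t (p1 t) /\
            derivable_pt_lim p1 t (s * p1 t - q * p0 t).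

(* Real roots: the larger root r > 0 gives p = e^{r t}; then
   p'' + e p' = (r^2 + e r) e^{r t}. *)
Lemma growing_solution_real s q e :
  0 < s -> 0 <= e -> 4 * q <= s ^ 2 ->
  exists p0 p1, solves_second_order s q p0 p1 /\
    exp_growing (fun t => - q * p0 t + (s + e) * p1 t).
Proof.
  intros Hs He Hdisc.
  set (r := (s + sqrt (s ^ 2 - 4 * q)) / 2).
  pose proof (sqrt_pos (s ^ 2 - 4 * q)) as Hsq.
  assert (Hr : 0 < r) by (unfold r; lra).
  assert (Hroot : r * r = s * r - q).
  { pose proof (pow2_sqrt (s ^ 2 - 4 * q) ltac:(lra)) as Hsq2.
    unfold r. set (d := sqrt (s ^ 2 - 4 * q)) in *. nra. }
  set (K := r * r + e * r).
  assert (HK : 0 < K) by (unfold K; nra).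
  exists (fun t => exp (r * t)), (fun t => r * exp (r * t)); split.
  - intros t; split; [apply derivable_pt_lim_exp_dilate|].
    apply (derivable_pt_lim_val _ _ (r * (r * exp (r * t)))).
    + apply (derivable_pt_lim_scal (fun u => exp (r * u))), derivable_pt_lim_exp_dilate.
    + rewrite <- Rmult_assoc, Hroot; ring.
  - assert (Hf : forall t, - q * exp (r * t) + (s + e) * (r * exp (r * t)) = K * exp (r * t)).
    { intros t; unfold K; rewrite Hroot; ring. }
    exists r, K, K; repeat split; try assumption.
    + intros t _; rewrite Hf, Rabs_right; [lra|].
      pose proof (exp_pos (r * t)); nra.
    + intros N; exists N; split; [lra|].
      rewrite Hf, Rabs_right; [lra|]. pose proof (exp_pos (r * N)); nra.
Qed.

Lemma trig_comb_bound P Q x : Rabs (P * cos x + Q * sin x) <= Rabs P + Rabs Q.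
Proof.
  eapply Rle_trans; [apply Rabs_triang|]. rewrite !Rabs_mult.
  pose proof (COS_bound x); pose proof (SIN_bound x).
  assert (Rabs (cos x) <= 1) by (apply Rabs_le; lra).
  assert (Rabs (sin x) <= 1) by (apply Rabs_le; lra).
  pose proof (Rabs_pos P); pose proof (Rabs_pos Q). nra.
Qed.

(* The points pi/2 + 2 n pi, where cos = 0 and sin = 1, are unbounded. *)
Lemma sin_peak_after N : exists x, N <= x /\ cos x = 0 /\ sin x = 1.
Proof.
  pose proof PI_RGT_0.
  destruct (INR_unbounded (N / (2 * PI))) as [n Hn].
  exists (PI / 2 + 2 * INR n * PI); split.
  - apply (Rmult_lt_compat_r (2 * PI)) in Hn; [|lra].
    replace (N / (2 * PI) * (2 * PI)) with N in Hn by (field; lra). lra.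
  - now rewrite cos_period, sin_period, cos_PI2, sin_PI2.
Qed.

(* Complex roots a +- i b with a = s / 2 > 0: p = e^{a t} cos (b t); then
   p'' + e p' = e^{a t} (P cos (b t) - Q sin (b t)) with Q = (s + e) b > 0. *)
Lemma growing_solution_complex s q e :
  0 < s -> 0 <= e -> s ^ 2 < 4 * q ->
  exists p0 p1, solves_second_order s q p0 p1 /\
    exp_growing (fun t => - q * p0 t + (s + e) * p1 t).
Proof.
  intros Hs He Hdisc.
  set (a := s / 2). set (b := sqrt (4 * q - s ^ 2) / 2).
  assert (Ha : 0 < a) by (unfold a; lra).
  assert (Hb : 0 < b) by (unfold b; apply Rdiv_lt_0_compat; [apply sqrt_lt_R0|]; lra).
  assert (Hq : q = a ^ 2 + b ^ 2).
  { unfold a, b. replace ((sqrt (4 * q - s ^ 2) / 2) ^ 2)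
      with (sqrt (4 * q - s ^ 2) ^ 2 / 4) by field.
    rewrite pow2_sqrt by lra. field. }
  set (C := fun t => exp (a * t) * cos (b * t)).
  set (S := fun t => exp (a * t) * sin (b * t)).
  set (P := (s + e) * a - q). set (Q := (s + e) * b).
  assert (HQ : 0 < Q) by (unfold Q; nra).
  exists C, (fun t => a * C t + - b * S t); split.
  - intros t; split.
    + apply (derivable_pt_lim_val _ _ _ _ (derivable_pt_lim_damped_cos a b t)).
      unfold C, S; ring.
    + eapply derivable_pt_lim_val.
      * apply derivable_pt_lim_lincomb;
          [apply derivable_pt_lim_damped_cos | apply derivable_pt_lim_damped_sin].
      * unfold C, S; replace s with (2 * a) by (unfold a; field); rewrite Hq; ring.
  - assert (Hf : forall t, - q * C t + (s + e) * (a * C t + - b * S t)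
                   = exp (a * t) * (P * cos (b * t) + - Q * sin (b * t))).
    { intros t; unfold C, S, P, Q; ring. }
    exists a, (Rabs P + Q), Q; repeat split; try assumption.
    + pose proof (Rabs_pos P); lra.
    + intros t _. rewrite Hf, Rabs_mult, Rabs_right by (left; apply exp_pos).
      rewrite (Rmult_comm (Rabs P + Q)). apply Rmult_le_compat_l; [left; apply exp_pos|].
      rewrite <- (Rabs_right Q) at 2 by lra. rewrite <- (Rabs_Ropp Q).
      apply trig_comb_bound.
    + intros N. destruct (sin_peak_after (N * b)) as [x [Hx [Hcos Hsin]]].
      exists (x / b); split.
      * apply (Rmult_le_reg_r b); [lra|]. replace (x / b * b) with x by (field; lra). lra.
      * rewrite Hf. replace (b * (x / b)) with x by (field; lra).
        rewrite Hcos, Hsin, Rabs_mult, Rabs_right by (left; apply exp_pos).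
        replace (P * 0 + - Q * 1) with (- Q) by ring.
        rewrite Rabs_Ropp, Rabs_right by lra. lra.
Qed.

Lemma growing_solution s q e :
  0 < s -> 0 <= e ->
  exists p0 p1, solves_second_order s q p0 p1 /\
    exp_growing (fun t => - q * p0 t + (s + e) * p1 t).
Proof.
  intros Hs He. destruct (Rlt_le_dec (s ^ 2) (4 * q)).
  - now apply growing_solution_complex.
  - now apply growing_solution_real.
Qed.

(* A monic cubic that is positive at 0 has a negative root: apply the
   intermediate value theorem on [-L, 0], L exceeding all coefficients. *)
Lemma monic_cubic_negative_root c2 c1 c0 :
  0 < c0 -> exists r, r < 0 /\ r ^ 3 + c2 * r ^ 2 + c1 * r + c0 = 0.
Proof.
  intros Hc0.
  set (p := fun x => x ^ 3 + c2 * x ^ 2 + c1 * x + c0).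
  set (L := 1 + Rabs c2 + Rabs c1 + Rabs c0).
  pose proof (Rabs_pos c2); pose proof (Rabs_pos c1); pose proof (Rabs_pos c0).
  assert (HL : 1 <= L) by (unfold L; lra).
  assert (HpL : p (- L) < 0).
  { unfold p. pose proof (Rle_abs c2); pose proof (Rle_abs c0).
    pose proof (Rle_abs (- c1)) as Hc1; rewrite Rabs_Ropp in Hc1.
    assert (HL2 : 1 <= L ^ 2) by nra.
    assert (c2 * L ^ 2 <= Rabs c2 * L ^ 2) by (apply Rmult_le_compat_r; nra).
    assert (- c1 * L <= Rabs c1 * L) by (apply Rmult_le_compat_r; lra).
    assert (Rabs c1 * L <= Rabs c1 * L ^ 2) by (apply Rmult_le_compat_l; nra).
    assert (Rabs c0 <= Rabs c0 * L ^ 2)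
      by (rewrite <- (Rmult_1_r (Rabs c0)) at 1; apply Rmult_le_compat_l; lra).
    assert (HLsum : Rabs c2 * L ^ 2 + Rabs c1 * L ^ 2 + Rabs c0 * L ^ 2 = L ^ 3 - L ^ 2)
      by (unfold L; ring).
    replace ((- L) ^ 3 + c2 * (- L) ^ 2 + c1 * - L + c0)
      with (- L ^ 3 + c2 * L ^ 2 + - c1 * L + c0) by ring.
    lra. }
  assert (Hp0 : 0 < p 0) by (unfold p; lra).
  assert (Hcont : continuity p) by (unfold p; reg).
  destruct (IVT p (- L) 0 Hcont ltac:(lra) HpL Hp0) as [r [[_ Hr] Hpr]].
  exists r; split; [|exact Hpr].
  destruct Hr as [Hr|Hr]; [exact Hr|]. subst r; lra.
Qed.

(* The in-phase system
     theta' = v,  v' = A theta + B v + kap w,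
     x' = w,      w' = gam theta - del v - eps w,
   and the characteristic polynomial of its (theta, v, w) part. *)
Definition solves_in_phase (A B kap gam del eps : R) (th v x w : R -> R) : Prop :=
  forall t,
    derivable_pt_lim th t (v t) /\
    derivable_pt_lim v t (A * th t + B * v t + kap * w t) /\
    derivable_pt_lim x t (w t) /\
    derivable_pt_lim w t (gam * th t - del * v t - eps * w t).

Definition in_phase_charpoly (A B kap gam del eps s : R) : R :=
  s ^ 3 + (eps - B) * s ^ 2 + (kap * del - A - B * eps) * s - (A * eps + kap * gam).

(* For a root r, the charpoly factors as (s - r) (s^2 - csum s + cprod). *)
Definition cofactor_sum (B eps r : R) : R := B - eps - r.
Definition cofactor_prod (A B kap del eps r : R) : R :=
  (kap * del - A - B * eps) - r * cofactor_sum B eps r.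

Section InPhaseMode.

Variables A B kap gam del eps r : R.
Hypothesis Hroot : in_phase_charpoly A B kap gam del eps r = 0.
Let csum := cofactor_sum B eps r.
Let cprod := cofactor_prod A B kap del eps r.
Variables p0 p1 : R -> R.
Hypothesis Hp : solves_second_order csum cprod p0 p1.

Lemma mode_lincomb_deriv al be t :
  derivable_pt_lim (fun s => al * p0 s + be * p1 s) t
    (- (be * cprod) * p0 t + (al + be * csum) * p1 t).
Proof.
  destruct (Hp t) as [H0 H1].
  eapply derivable_pt_lim_val; [apply (derivable_pt_lim_lincomb _ _ _ _ _ _ _ H0 H1)|].
  ring.
Qed.

(* A solution p of the quadratic cofactor yields the in-phase solution
   theta = p'' + eps p',  x = gam p - del p'.  Only the v'-equation uses
   that r is a root. *)
Lemma in_phase_mode :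
  exists th v x w : R -> R, solves_in_phase A B kap gam del eps th v x w /\
    th = (fun t => - cprod * p0 t + (csum + eps) * p1 t).
Proof.
  exists (fun t => - cprod * p0 t + (csum + eps) * p1 t),
    (fun t => - (cprod * (csum + eps)) * p0 t + ((csum + eps) * csum - cprod) * p1 t),
    (fun t => gam * p0 t + - del * p1 t),
    (fun t => del * cprod * p0 t + (gam - del * csum) * p1 t).
  split; [|reflexivity].
  intros t; repeat split;
    (eapply derivable_pt_lim_val; [apply mode_lincomb_deriv|]); try ring.
  transitivity (A * (- cprod * p0 t + (csum + eps) * p1 t) +
    B * (- (cprod * (csum + eps)) * p0 t + ((csum + eps) * csum - cprod) * p1 t) +
    kap * (del * cprod * p0 t + (gam - del * csum) * p1 t)
    + in_phase_charpoly A B kap gam del eps r * p1 t).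
  - unfold cprod, csum, cofactor_prod, cofactor_sum, in_phase_charpoly; ring.
  - rewrite Hroot; ring.
Qed.

End InPhaseMode.

Definition scale (c : R) (y : st) : st :=
  mkst (c * th1 y) (c * v1 y) (c * th2 y) (c * v2 y)
       (c * x1 y) (c * w1 y) (c * x2 y) (c * w2 y).

Lemma is_solution_scale (F : st -> st) (y : R -> st) (T c : R) :
  (forall c y, F (scale c y) = scale c (F y)) ->
  is_solution F y T -> is_solution F (fun t => scale c (y t)) T.
Proof.
  intros HF Hsol t Ht. rewrite HF. simpl.
  destruct (Hsol t Ht) as (H1 & H2 & H3 & H4 & H5 & H6 & H7 & H8).
  repeat split; apply (derivable_pt_lim_scal (fun s => _ (y s))); assumption.
Qed.

Lemma is_solution_agree (F G : st -> st) (y : R -> st) (T : R) :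
  (forall t, 0 <= t <= T -> F (y t) = G (y t)) ->
  is_solution G y T -> is_solution F y T.
Proof. intros HFG Hsol t Ht. rewrite HFG by exact Ht. exact (Hsol t Ht). Qed.

Lemma dist8_th1 y p : Rabs (th1 y - th1 p) <= dist8 y p.
Proof.
  unfold dist8. rewrite <- sqrt_Rsqr_abs. apply sqrt_le_1_alt. unfold Rsqr.
  pose proof (pow2_ge_0 (v1 y - v1 p)); pose proof (pow2_ge_0 (th2 y - th2 p)).
  pose proof (pow2_ge_0 (v2 y - v2 p)); pose proof (pow2_ge_0 (x1 y - x1 p)).
  pose proof (pow2_ge_0 (w1 y - w1 p)); pose proof (pow2_ge_0 (x2 y - x2 p)).
  pose proof (pow2_ge_0 (w2 y - w2 p)). simpl; lra.
Qed.

Lemma dist8_scale_origin c y : 0 <= c -> dist8 (scale c y) st0 = c * dist8 y st0.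
Proof.
  intros Hc. unfold dist8; simpl.
  assert (Hsq : forall u, sqrt (c ^ 2 * u) = c * sqrt u).
  { intros u. rewrite sqrt_mult_alt by apply pow2_ge_0. now rewrite sqrt_pow2. }
  rewrite <- Hsq. f_equal; ring.
Qed.

Lemma fixed_line_st0 : fixed_line st0.
Proof. unfold fixed_line; simpl; repeat split. Qed.

(* Given eps = kappa thT / 2 and delta,
   choose a peak time T with |theta1 (Y T)| huge and c = eps / |theta1 (Y T)|:
   then c Y starts within delta of the origin, obeys the box on [0, T], and
   is at distance >= eps from the line at time T. *)
Lemma unstable_of_growing_peaks (F : st -> st) (Y : R -> st) (thT : R) :
  0 < thT -> has_growing_peaks (fun t => th1 (Y t)) ->
  (forall c T, 0 < c -> (forall t, 0 <= t <= T -> Rabs (c * th1 (Y t)) < thT) ->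
     is_solution F (fun t => scale c (Y t)) T) ->
  lyapunov_unstable F fixed_line.
Proof.
  intros Hth [kap [Hkap Hpeak]] Hsol Hstab.
  set (eps := kap * thT / 2).
  destruct (Hstab eps) as [d [Hd Hnear]]; [unfold eps; nra|].
  set (D0 := dist8 (Y 0) st0).
  assert (HD0 : 0 <= D0) by apply sqrt_pos.
  destruct (Hpeak (kap * thT * D0 / (2 * d) + 1)) as [T [HT [Hbig Hdom]]].
  set (peak := Rabs (th1 (Y T))) in *.
  assert (Hsmall : kap * thT * D0 < 2 * d * peak).
  { apply (Rmult_le_compat_l (2 * d)) in Hbig; [|lra].
    replace (2 * d * (kap * thT * D0 / (2 * d) + 1))
      with (kap * thT * D0 + 2 * d) in Hbig by (field; lra). lra. }
  assert (Hpeak_pos : 0 < peak).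
  { assert (0 <= kap * thT * D0) by (repeat apply Rmult_le_pos; lra). nra. }
  set (c := eps / peak).
  assert (Hc : 0 < c) by (unfold c, eps; apply Rdiv_lt_0_compat; nra).
  assert (Hcpeak : c * peak = eps) by (unfold c; field; lra).
  assert (Hbox : forall t, 0 <= t <= T -> Rabs (c * th1 (Y t)) < thT).
  { intros t Ht. rewrite Rabs_mult, (Rabs_right c) by lra.
    specialize (Hdom t Ht).
    apply (Rmult_lt_reg_l kap); [lra|].
    assert (c * (kap * Rabs (th1 (Y t))) <= c * peak) by (apply Rmult_le_compat_l; lra).
    unfold eps in Hcpeak; nra. }
  assert (Hstart : near fixed_line d (scale c (Y 0))).
  { exists st0; split; [apply fixed_line_st0|].
    rewrite dist8_scale_origin by lra. fold D0.
    apply (Rmult_lt_reg_l peak); [lra|].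
    replace (peak * (c * D0)) with (eps * D0) by (rewrite <- Hcpeak; ring).
    unfold eps; nra. }
  destruct (Hnear (fun t => scale c (Y t)) T HT (Hsol c T Hc Hbox) Hstart T
              (conj HT (Rle_refl T))) as [p [[Hp _] Hdist]].
  pose proof (dist8_th1 (scale c (Y T)) p) as Hth1.
  rewrite Hp, Rminus_0_r in Hth1. simpl in Hth1.
  rewrite Rabs_mult, (Rabs_right c) in Hth1 by lra. fold peak in Hth1. lra.
Qed.

Definition pendulum_A (M l m g : R) : R := - omega2 g l * (1 + m / M).
Definition pendulum_B (lam M l m : R) : R := 2 * lam * (1 / (M * l) + 1 / (m * l)).

Definition in_phase_state (th v x w : R) : st := mkst th v th v x w x w.

(* On in-phase states the coupling spring is relaxed and Q reduces to the
   in-phase system. *)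
Lemma Qfield_in_phase lam M l m g k rho th v x w :
  Qfield lam M l m g k rho (in_phase_state th v x w) =
  in_phase_state v
    (pendulum_A M l m g * th + pendulum_B lam M l m * v + 2 * rho / (M * l) * w) w
    (m * g / M * th - 2 * lam / M * v - 2 * rho / M * w).
Proof. unfold Qfield, in_phase_state, pendulum_A, pendulum_B; simpl; f_equal; ring. Qed.

Lemma in_phase_solution lam M l m g k rho th v x w T :
  solves_in_phase (pendulum_A M l m g) (pendulum_B lam M l m) (2 * rho / (M * l))
    (m * g / M) (2 * lam / M) (2 * rho / M) th v x w ->
  is_solution (Qfield lam M l m g k rho)
    (fun t => in_phase_state (th t) (v t) (x t) (w t)) T.
Proof.
  intros Hsol t _. rewrite Qfield_in_phase. simpl.
  destruct (Hsol t) as (Hth & Hv & Hx & Hw). repeat split; assumption.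
Qed.

Lemma Qfield_scale lam M l m g k rho c y :
  Qfield lam M l m g k rho (scale c y) = scale c (Qfield lam M l m g k rho y).
Proof. unfold Qfield, scale; simpl; f_equal; ring. Qed.

Lemma Sfield_eq_Qfield lam M l m g k rho thT y :
  M <> 0 -> l <> 0 -> m <> 0 -> Rabs (th1 y) < thT -> Rabs (th2 y) < thT ->
  Sfield lam M l m g k rho thT y = Qfield lam M l m g k rho y.
Proof.
  intros HM Hl Hm H1 H2. unfold Sfield, Qfield, fsw.
  destruct (Rlt_dec (Rabs (th1 y)) thT); [|contradiction].
  destruct (Rlt_dec (Rabs (th2 y)) thT); [|contradiction].
  f_equal; field; auto.
Qed.

Lemma fixed_line_is_fixed lam M l m g k rho thT p :
  fixed_line p ->
  is_fixed_point (Qfield lam M l m g k rho) p /\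
  is_fixed_point (Sfield lam M l m g k rho thT) p.
Proof.
  destruct p as [t1 u1 t2 u2 a1 b1 a2 b2].
  intros (E1 & E2 & E3 & E4 & E5 & E6 & E7); simpl in *; subst.
  unfold is_fixed_point, Qfield, Sfield, st0; simpl; split; f_equal; ring.
Qed.

Lemma in_phase_growing_solution lam M l m g k rho :
  0 < M -> 0 < l -> 0 < m -> 0 < g -> 0 < rho ->
  2 * rho / M < pendulum_B lam M l m ->
  exists Y : R -> st,
    (forall T, is_solution (Qfield lam M l m g k rho) Y T) /\
    (forall t, th2 (Y t) = th1 (Y t)) /\
    has_growing_peaks (fun t => th1 (Y t)).
Proof.
  intros HM Hl Hm Hg Hrho Hsmall.
  set (A := pendulum_A M l m g). set (B := pendulum_B lam M l m).
  set (kap := 2 * rho / (M * l)). set (gam := m * g / M).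
  set (del := 2 * lam / M). set (eps := 2 * rho / M).
  assert (Heps : 0 < eps) by (unfold eps; apply Rdiv_lt_0_compat; lra).
  assert (Hc0 : 0 < - (A * eps + kap * gam)).
  { replace (- (A * eps + kap * gam)) with (2 * rho * g / (M * l))
      by (unfold A, eps, kap, gam, pendulum_A, omega2; field; lra).
    apply Rdiv_lt_0_compat; nra. }
  destruct (monic_cubic_negative_root (eps - B) (kap * del - A - B * eps) _ Hc0)
    as [r [Hr Hroot]].
  assert (Hchar : in_phase_charpoly A B kap gam del eps r = 0)
    by (unfold in_phase_charpoly; rewrite <- Hroot; ring).
  assert (Hsum : 0 < cofactor_sum B eps r) by (unfold cofactor_sum, B, eps; lra).
  destruct (growing_solution _ (cofactor_prod A B kap del eps r) eps Hsum (Rlt_le _ _ Heps))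
    as (p0 & p1 & Hp & Hgrow).
  destruct (in_phase_mode A B kap gam del eps r Hchar p0 p1 Hp)
    as (th & v & x & w & Hmode & Hth).
  exists (fun t => in_phase_state (th t) (v t) (x t) (w t)).
  split; [|split].
  - intros T. now apply in_phase_solution.
  - reflexivity.
  - apply exp_growing_peaks. simpl. now rewrite Hth.
Qed.

Theorem proposition2 (lam M l m g k thT : R) :
  0 < lam -> 0 < M -> 0 < l -> 0 < m -> 0 < g -> 0 < k -> 0 < thT ->
  exists rho0, 0 < rho0 /\
    forall rho, 0 < rho < rho0 ->
      (forall p, fixed_line p ->
         is_fixed_point (Qfield lam M l m g k rho) p /\
         is_fixed_point (Sfield lam M l m g k rho thT) p) /\
      lyapunov_unstable (Qfield lam M l m g k rho) fixed_line /\
      lyapunov_unstable (Sfield lam M l m g k rho thT) fixed_line.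
Proof.
  intros Hlam HM Hl Hm Hg Hk Hth.
  assert (HB : 0 < pendulum_B lam M l m).
  { unfold pendulum_B.
    assert (0 < 1 / (M * l)) by (apply Rdiv_lt_0_compat; nra).
    assert (0 < 1 / (m * l)) by (apply Rdiv_lt_0_compat; nra). nra. }
  exists (M * pendulum_B lam M l m / 2); split; [nra|].
  intros rho [Hrho Hrho0].
  assert (Hsmall : 2 * rho / M < pendulum_B lam M l m).
  { apply (Rmult_lt_reg_r M); [lra|].
    replace (2 * rho / M * M) with (2 * rho) by (field; lra). lra. }
  destruct (in_phase_growing_solution lam M l m g k rho HM Hl Hm Hg Hrho Hsmall)
    as (Y & HY & Hsym & Hpeaks).
  split; [|split].
  - intros p Hp. now apply fixed_line_is_fixed.
  - apply (unstable_of_growing_peaks _ Y thT Hth Hpeaks).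
    intros c T _ _. apply is_solution_scale; [apply Qfield_scale | apply HY].
  - apply (unstable_of_growing_peaks _ Y thT Hth Hpeaks).
    intros c T _ Hbox.
    apply (is_solution_agree _ (Qfield lam M l m g k rho)).
    + intros t Ht. apply Sfield_eq_Qfield; try lra; simpl;
        [|rewrite Hsym]; apply Hbox, Ht.
    + apply is_solution_scale; [apply Qfield_scale | apply HY].
Qed.
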